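(* Let $\mathbf{a}=\langle a_1,\dots,a_s\rangle$ and $\mathbf{b}=\langle b_1,\dots,b_t\rangle$ be integer vectors with $a_1+\cdots+a_s=b_1+\cdots+b_t$, and let $n,m$ be positive integers. Let $r+1=\max(s,n+t)$ and \[\delta=a_1\varepsilon_1+\cdots+a_s\varepsilon_s-(b_1\varepsilon_{n+1}+\cdots+b_t\varepsilon_{n+t})\in\mathbb{Z}^{r+1}.\] Let $\Lambda=\{\varepsilon_i-\varepsilon_j:1\le i<j\le r+1,\ i\le n\}\subseteq\Phi^+_{A_r}$ and \[Q_\Lambda(\delta)=\Big\{p\in P_\Lambda(\delta):\ a_j+\#\{\text{elements of }p\text{ of the form }\varepsilon_i-\varepsilon_j\}\le m\ \text{for all } j\ge1\Big\},\] where $a_j=0$ for $j>s$ and elements of $p$ are counted with multiplicity. Then the map sending a juggling sequence to the multiset of roots $\varepsilon_i-\varepsilon_{i+j}$ (one per throw at time $i$ to height $j$) is a bijection from $\mathrm{JS}(\mathbf{a},\mathbf{b},n,m)$ onto $Q_\Lambda(\delta)$; hence $\mathsf{js}(\mathbf{a},\mathbf{b},n,m)=|Q_\Lambda(\delta)|$. Moreover, without hand capacity constraint, $\mathsf{js}(\mathbf{a},\mathbf{b},n)=K_\Lambda(\delta)$.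
   Context: A juggling state is a finitely supported integer vector $\mathbf{s}=\langle s_1,s_2,\dots\rangle$ indexed by heights (trailing zeros omitted; negative entries are magic balls). A juggling sequence of length $n$ from $\mathbf{a}$ to $\mathbf{b}$ is a sequence $(\mathbf{s}_0,\dots,\mathbf{s}_n)$ with $\mathbf{s}_0=\mathbf{a}$, $\mathbf{s}_n=\mathbf{b}$, such that for each $1\le i\le n$ there are nonnegative integers $c^{(i)}_k$ (finitely many nonzero) with $\sum_k c^{(i)}_k=(\mathbf{s}_{i-1})_1$ and $(\mathbf{s}_i)_k=(\mathbf{s}_{i-1})_{k+1}+c^{(i)}_k$ for all $k\ge1$; $c^{(i)}_j$ is the number of throws at time $i$ to height $j$. It has hand capacity $m$ if all entries of all $\mathbf{s}_i$ are $\le m$. $\mathrm{JS}(\mathbf{a},\mathbf{b},n,m)$ is the set of such sequences with hand capacity $m$, $\mathsf{js}(\mathbf{a},\mathbf{b},n,m)$ its cardinality; $\mathrm{JS}(\mathbf{a},\mathbf{b},n)$, $\mathsf{js}(\mathbf{a},\mathbf{b},n)$ are the same without hand capacity constraint. $\Phi^+_{A_r}=\{\varepsilon_i-\varepsilon_j:1\le i<j\le r+1\}\subset\mathbb{R}^{r+1}$; for $\Lambda\subseteq\Phi^+_{A_r}$, $P_\Lambda(\mu)$ is the set of finite multisets of elements of $\Lambda$ summing to $\mu$, and $K_\Lambda(\mu)=|P_\Lambda(\mu)|$. *)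

From HB Require Import structures.
From mathcomp Require Import all_boot all_order all_algebra.
Set Implicit Arguments. Unset Strict Implicit. Unset Printing Implicit Defensive.
Import Order.TTheory GRing.Theory Num.Theory.
Local Open Scope ring_scope.

(** Juggling states: finitely supported integer vectors <s_1, s_2, ...>,
    represented canonically by the list [s_1; ...; s_L] with trailing zeros
    omitted. *)
Fixpoint trim (s : seq int) : seq int :=
  match s with
  | [::] => [::]
  | x :: s' => let t := trim s' in
               if (t == [::]) && (x == 0) then [::] else x :: t
  end.

Definition ent (s : seq int) (k : nat) : int := nth 0 s k.-1.

Definition jstep (s s' : seq int) : Prop :=
  exists (c : nat -> nat) (N : nat),
    (forall k, (N < k)%N -> c k = 0%N) /\
    \sum_(1 <= k < N.+1) (c k)%:Z = ent s 1 /\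
    (forall k, (0 < k)%N -> ent s' k = ent s k.+1 + (c k)%:Z).

Definition JSeq (a b : seq int) (n : nat) (ss : seq (seq int)) : Prop :=
  [/\ size ss = n.+1,
      all (fun s => trim s == s) ss,
      nth [::] ss 0 = trim a,
      nth [::] ss n = trim b
    & forall i, (i < n)%N -> jstep (nth [::] ss i) (nth [::] ss i.+1)].

Definition handcap (m : nat) (ss : seq (seq int)) : Prop :=
  forall s, s \in ss -> forall x, x \in s -> x <= m%:Z.

Definition JS (a b : seq int) (n m : nat) (ss : seq (seq int)) : Prop :=
  JSeq a b n ss /\ handcap m ss.

Definition card_is (T : eqType) (P : T -> Prop) (k : nat) : Prop :=
  exists l : seq T, [/\ uniq l, (forall x, x \in l <-> P x) & size l = k].

(** Coordinates 1..r+1 are represented by ordinals 0..r of 'I_R, R = r+1.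
    The root eps_i - eps_j is the pair (i-1, j-1). Multisets of roots are
    multiplicity functions. *)
Definition Rdim (a b : seq int) (n : nat) : nat := maxn (size a) (n + size b).

Definition Lam (R n : nat) (ij : 'I_R * 'I_R) : bool :=
  (ij.1 < ij.2)%N && (ij.1 < n)%N.

Definition PL (R : nat) (L : pred ('I_R * 'I_R)) (mu : 'I_R -> int)
    (p : {ffun 'I_R * 'I_R -> nat}) : Prop :=
  (forall ij, ~~ L ij -> p ij = 0%N) /\
  (forall k : 'I_R,
     \sum_(ij : 'I_R * 'I_R) (p ij)%:Z * ((ij.1 == k)%:Z - (ij.2 == k)%:Z)
     = mu k).

Definition delta (R : nat) (a b : seq int) (n : nat) (k : 'I_R) : int :=
  nth 0 a k - (if (n <= k)%N then nth 0 b (k - n) else 0).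

Definition QL (R : nat) (a b : seq int) (n m : nat)
    (p : {ffun 'I_R * 'I_R -> nat}) : Prop :=
  PL (@Lam R n) (delta a b n) p /\
  (forall k : 'I_R, nth 0 a k + (\sum_(i : 'I_R) p (i, k))%:Z <= m%:Z).

(** The map: each throw at time i to height j gives eps_i - eps_{i+j};
    the number of such throws is c^{(i)}_j = (s_i)_j - (s_{i-1})_{j+1}. *)
Definition jmap (R n : nat) (ss : seq (seq int)) : {ffun 'I_R * 'I_R -> nat} :=
  [ffun ij : 'I_R * 'I_R =>
     if (ij.1 < ij.2)%N && (ij.1 < n)%N then
       `| ent (nth [::] ss ij.1.+1) (ij.2 - ij.1)
          - ent (nth [::] ss ij.1) (ij.2 - ij.1).+1 |%N
     else 0%N].

From HB Require Import structures.
From mathcomp Require Import all_boot all_order all_algebra.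
From mathcomp Require Import ring lra zify.
Import Order.TTheory GRing.Theory Num.Theory.
Local Open Scope ring_scope.
Set Implicit Arguments. Unset Strict Implicit.

(* Telescoping the step relation shows that the state at time t of a juggling
   sequence from a is (s_t)_k = a_{t+k} + #{throws before time t that land at
   time t+k}, so a juggling sequence is determined by its multiset of throws,
   i.e. of roots eps_i - eps_{i+h}.  Conversely, every multiset p of roots in
   Lambda defines states by this formula; the condition that the throws at time
   i number (s_{i-1})_1 is the coordinate i <= n of "p sums to delta", and the
   final state is b exactly when the coordinates > n of that equation hold.
   Every entry of a state is bounded by a_k plus the number of roots of p
   ending in eps_k, with equality at time min(k, n), which translates the hand
   capacity.  Finally P_Lambda(delta) is finite: pairing "p sums to delta" with
   the weights k gives sum_p (j - i) = - sum_k k delta_k, which bounds every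
   multiplicity. *)

Lemma nth_trim (s : seq int) i : nth 0 (trim s) i = nth 0 s i.
Proof.
elim: s i => [|x s IH] i //=.
case: ifP => [/andP [/eqP E /eqP ->]|_]; last by case: i.
by case: i => [|i] //=; rewrite -IH E nth_nil.
Qed.

Lemma trim_eq_nil (s : seq int) : (forall i, nth 0 s i = 0) -> trim s = [::].
Proof.
elim: s => [|x s IH] //= s0.
by rewrite IH => [|i]; [have /= -> := s0 0%N | exact: (s0 i.+1)].
Qed.

Lemma eq_trim (s s' : seq int) :
  (forall i, nth 0 s i = nth 0 s' i) -> trim s = trim s'.
Proof.
elim: s s' => [|x s IH] [|y s'] eq_s.
- by [].
- by rewrite (@trim_eq_nil (y :: s')) // => i; rewrite -eq_s nth_nil.
- by rewrite trim_eq_nil // => i; rewrite eq_s nth_nil.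
have -> : x = y by exact: (eq_s 0%N).
by rewrite /= (IH s') // => i; exact: (eq_s i.+1).
Qed.

Lemma trim_idem (s : seq int) : trim (trim s) = trim s.
Proof. by apply: eq_trim => i; rewrite nth_trim. Qed.

Lemma mem_trim x (s : seq int) : x \in trim s -> x \in s.
Proof.
elim: s => [|y s IH] //=; case: ifP => // _.
by rewrite !inE => /orP [->|/IH ->]; rewrite ?orbT.
Qed.

Lemma nth_le (s : seq int) (m : nat) i :
  (forall x, x \in s -> x <= m%:Z) -> nth 0 s i <= m%:Z.
Proof.
move=> s_le; have [/(mem_nth 0)/s_le //|le_s_i] := ltnP i (size s).
by rewrite nth_default.
Qed.

Lemma Posz_sum (I : Type) (r : seq I) (P : pred I) (F : I -> nat) :
  ((\sum_(i <- r | P i) F i)%N : int) = \sum_(i <- r | P i) (F i)%:Z.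
Proof. exact: (big_morph Posz PoszD erefl). Qed.

Lemma big_nat_extend0 (F : nat -> nat) m n1 n2 : (m <= n1)%N -> (n1 <= n2)%N ->
  (forall i, (n1 <= i)%N -> F i = 0%N) ->
  (\sum_(m <= i < n1) F i = \sum_(m <= i < n2) F i)%N.
Proof.
move=> le_m_n1 le_n12 F0; rewrite (big_cat_nat le_m_n1 le_n12) /=.
rewrite [X in (_ + X)%N]big1_seq ?addn0 // => i /andP [_].
by rewrite mem_index_iota => /andP [/F0].
Qed.

Lemma big_nat_shift0 (F : nat -> nat) k N M :
  (forall j, (j <= k)%N -> F j = 0%N) -> (forall j, (N <= j)%N -> F j = 0%N) ->
  (N <= M)%N -> (0 < M)%N ->
  (\sum_(0 <= j < N) F j = \sum_(1 <= h < M) F (k + h))%N.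
Proof.
move=> F0_low F0_high le_NM M_gt0.
rewrite (@big_nat_extend0 F 0 N (k + M)) // ?(leq_trans le_NM (leq_addl _ _)) //.
rewrite (@big_cat_nat _ _ _ k.+1) //=; last by rewrite -addn1 leq_add2l.
rewrite big1_seq ?add0n => [|j]; last by rewrite mem_index_iota => /andP [_ /F0_low].
by rewrite -add1n big_addn addKn; apply: eq_big_nat => h _; rewrite addnC.
Qed.

Lemma sum_delta (T : finType) (F : T -> int) (k : T) :
  \sum_(i : T) (i == k)%:Z * F i = F k.
Proof.
by rewrite (bigD1 k) //= eqxx mul1r big1 ?addr0 // => i /negbTE ->; rewrite mul0r.
Qed.

Lemma card_is_bij (T U : eqType) (P : T -> Prop) (Q : U -> Prop)
    (f : T -> U) (g : U -> T) k :
  (forall x, P x -> Q (f x)) -> (forall y, Q y -> P (g y)) ->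
  (forall x, P x -> g (f x) = x) -> (forall y, Q y -> f (g y) = y) ->
  card_is Q k -> card_is P k.
Proof.
move=> PQ QP fK gK [l [uniq_l memQ <-]].
exists (map g l); split; last by rewrite size_map.
- rewrite map_inj_in_uniq // => y1 y2 /memQ Qy1 /memQ Qy2 eq_g.
  by rewrite -(gK _ Qy1) -(gK _ Qy2) eq_g.
- move=> x; split => [/mapP [y /memQ Qy ->]|Px]; first exact: QP.
  by apply/mapP; exists (f x); [apply/memQ; exact: PQ | rewrite fK].
Qed.

Lemma card_is_bounded_ffun (T : finType) (P : {ffun T -> nat} -> Prop)
    (Pb : pred {ffun T -> nat}) B :
  (forall p, P p <-> Pb p) -> (forall p, P p -> forall x, (p x <= B)%N) ->
  exists k, card_is P k.
Proof.
move=> PP bounded.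
pose l := [seq [ffun x => val (f x)] | f : {ffun T -> 'I_B.+1} <- enum {: _}].
exists (size (filter Pb l)), (filter Pb l); split => //.
  rewrite filter_uniq // map_inj_uniq ?enum_uniq // => f g /ffunP eq_fg.
  by apply/ffunP => x; apply: val_inj; have := eq_fg x; rewrite !ffunE.
move=> p; rewrite mem_filter PP; split => [/andP [] //|Pbp].
rewrite Pbp /=; apply/mapP; exists [ffun x => inord (p x)]; first by rewrite mem_enum.
by apply/ffunP => x; rewrite !ffunE; apply/esym/inordK; rewrite ltnS bounded // PP.
Qed.

Section RootMultisets.
Variables (R : nat) (L : pred ('I_R * 'I_R)) (mu : 'I_R -> int).
Implicit Types p : {ffun 'I_R * 'I_R -> nat}.

Definition PLb p : bool :=
  [forall ij, L ij || (p ij == 0%N)] &&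
  [forall k, \sum_ij (p ij)%:Z * ((ij.1 == k)%:Z - (ij.2 == k)%:Z) == mu k].

Lemma PLP p : PL L mu p <-> PLb p.
Proof.
split => [[supp sum_mu]|/andP [/forallP supp /forallP sum_mu]].
  apply/andP; split; first by apply/forallP => ij; have [//|/supp ->] := boolP (L ij).
  by apply/forallP => k; rewrite sum_mu.
by split => [ij /negbTE Lij | k]; [move: (supp ij); rewrite Lij => /eqP | exact/eqP].
Qed.

Lemma sum_rootsE p k :
  \sum_ij (p ij)%:Z * ((ij.1 == k)%:Z - (ij.2 == k)%:Z)
  = (\sum_j p (k, j))%N%:Z - (\sum_i p (i, k))%N%:Z.
Proof.
transitivity (\sum_i \sum_j (p (i, j))%:Z * ((i == k)%:Z - (j == k)%:Z)).
  by rewrite pair_bigA; apply: eq_bigr => -[i j].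
rewrite !Posz_sum; under eq_bigr do (under eq_bigr do rewrite mulrBr; rewrite sumrB).
rewrite sumrB; congr (_ - _).
  under eq_bigr do (under eq_bigr do rewrite mulrC; rewrite -mulr_sumr).
  exact: (sum_delta (fun i => \sum_j (p (i, j))%:Z)).
rewrite exchange_big /=.
under eq_bigr do (under eq_bigr do rewrite mulrC; rewrite -mulr_sumr).
exact: (sum_delta (fun j => \sum_i (p (i, j))%:Z)).
Qed.

Lemma sum_roots_weighted p (w : 'I_R -> int) :
  \sum_k w k * \sum_ij (p ij)%:Z * ((ij.1 == k)%:Z - (ij.2 == k)%:Z)
  = \sum_ij (p ij)%:Z * (w ij.1 - w ij.2).
Proof.
under eq_bigr do rewrite mulr_sumr; rewrite exchange_big /=.
apply: eq_bigr => ij _.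
rewrite -(sum_delta w ij.1) -(sum_delta w ij.2) -sumrB mulr_sumr.
by apply: eq_bigr => k _; rewrite !(eq_sym k); ring.
Qed.

Lemma PL_mult_le p : (forall ij, L ij -> (ij.1 < ij.2)%N) -> PL L mu p ->
  forall ij, (p ij <= `|(\sum_(k : 'I_R) (k : nat)%:Z * mu k)%R|)%N.
Proof.
move=> L_lt [supp sum_mu] ij.
pose S := \sum_kl (p kl)%:Z * ((kl.2 : nat)%:Z - (kl.1 : nat)%:Z).
have mult_le kl : (p kl)%:Z <= (p kl)%:Z * ((kl.2 : nat)%:Z - (kl.1 : nat)%:Z).
  have [/L_lt lt_kl|/supp ->] := boolP (L kl); last by rewrite mul0r.
  by rewrite ler_peMr // lerBrDr -PoszD lez_nat add1n.
have S_ge : (p ij)%:Z <= S.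
  apply: le_trans (mult_le ij) _; rewrite /S (bigD1 ij) //= lerDl.
  by apply: sumr_ge0 => kl _; exact: le_trans (mult_le kl).
have -> : \sum_(k : 'I_R) (k : nat)%:Z * mu k = - S.
  rewrite -sumrN; under eq_bigr do rewrite -sum_mu.
  rewrite sum_roots_weighted; apply: eq_bigr => kl _; ring.
by rewrite abszN -lez_nat gez0_abs // (le_trans _ S_ge).
Qed.

End RootMultisets.

Section JugglingMultisets.
Variables (a b : seq int) (n : nat).
Local Notation R := (Rdim a b n).
Local Notation PLd := (PL (@Lam R n) (delta a b n)).
Implicit Types (p : {ffun 'I_R * 'I_R -> nat}) (ss : seq (seq int)).

(* Indices are 0-based: time t is the paper's time t+1 and coordinate k is
   eps_{k+1}; a throw at time i to height h is the root (i, i+h). *)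

Lemma size_a_le : (size a <= R)%N. Proof. exact: leq_maxl. Qed.
Lemma size_b_le : (n + size b <= R)%N. Proof. exact: leq_maxr. Qed.
Lemma n_le : (n <= R)%N. Proof. exact: leq_trans (leq_addr _ _) size_b_le. Qed.

Lemma nth_a_out x : (R <= x)%N -> nth 0 a x = 0.
Proof. by move=> le_R_x; rewrite nth_default // (leq_trans size_a_le). Qed.

Definition mult p (i j : nat) : nat :=
  match (insub i : option 'I_R), (insub j : option 'I_R) with
  | Some i', Some j' => p (i', j')
  | _, _ => 0%N end.

Lemma multE p (i j : 'I_R) : mult p i j = p (i, j).
Proof. by rewrite /mult !valK. Qed.

Lemma mult_outl p i j : (R <= i)%N -> mult p i j = 0%N.
Proof. by move=> le_R_i; rewrite /mult insubF // ltnNge le_R_i. Qed.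

Lemma mult_outr p i j : (R <= j)%N -> mult p i j = 0%N.
Proof.
by move=> le_R_j; rewrite /mult [insub j]insubF ?ltnNge ?le_R_j //; case: insub.
Qed.

Definition arrivals p x t := (\sum_(0 <= i < t) mult p i x)%N.
Definition throws p i := (\sum_(0 <= j < R) mult p i j)%N.

Definition state_entry p t k : int := nth 0 a (t + k) + (arrivals p (t + k) t)%:Z.
Definition state_of p t : seq int := trim (mkseq (state_entry p t) R).
Definition jseq_of p : seq (seq int) := mkseq (state_of p) n.+1.

Lemma arrivals_S p x t : arrivals p x t.+1 = (arrivals p x t + mult p t x)%N.
Proof. by rewrite /arrivals big_nat_recr. Qed.

Lemma arrivals_ord p (k : 'I_R) : arrivals p k R = (\sum_i p (i, k))%N.
Proof. by rewrite /arrivals big_mkord; apply: eq_bigr => i _; rewrite multE. Qed.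

Lemma throws_ord p (k : 'I_R) : throws p k = (\sum_j p (k, j))%N.
Proof. by rewrite /throws big_mkord; apply: eq_bigr => j _; rewrite multE. Qed.

Lemma state_entry_out p t k : (R <= t + k)%N -> state_entry p t k = 0.
Proof.
move=> le_R; rewrite /state_entry nth_a_out // /arrivals big1_seq // => i _.
exact: mult_outr.
Qed.

Lemma state_entry_S p t k :
  state_entry p t.+1 k = state_entry p t k.+1 + (mult p t (t.+1 + k))%:Z.
Proof. by rewrite /state_entry arrivals_S PoszD addSnnS addrA. Qed.

Lemma nth_state_of p t k : nth 0 (state_of p t) k = state_entry p t k.
Proof.
rewrite nth_trim; have [lt_k_R|le_R_k] := ltnP k R; first by rewrite nth_mkseq.
by rewrite nth_default ?size_mkseq // state_entry_out // (leq_trans le_R_k) ?leq_addl.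
Qed.

Lemma state_of_eq p t (s : seq int) :
  (forall k, state_entry p t k = nth 0 s k) -> state_of p t = trim s.
Proof.
move=> E; rewrite -[state_of p t]trim_idem.
by apply: eq_trim => k; rewrite nth_state_of.
Qed.

Lemma ent_state_of p t k : ent (state_of p t) k = state_entry p t k.-1.
Proof. exact: nth_state_of. Qed.

Lemma nth_jseq_of p t : (t <= n)%N -> nth [::] (jseq_of p) t = state_of p t.
Proof. by move=> le_t_n; rewrite nth_mkseq. Qed.

Definition supp_Lam p := forall i x, ~~ ((i < x) && (i < n))%N -> mult p i x = 0%N.

Lemma supp_Lam_of p : (forall ij, ~~ Lam n ij -> p ij = 0%N) -> supp_Lam p.
Proof.
move=> supp i x not_Lam; rewrite /mult.
case: insubP => // i' _ vi'; case: insubP => // x' _ vx'.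
by apply: supp; rewrite /Lam /= vi' vx'.
Qed.

Lemma PL_supp_Lam p : PLd p -> supp_Lam p.
Proof. by case=> supp _; exact: supp_Lam_of. Qed.

Lemma supp_Lam_jmap ss : supp_Lam (jmap R n ss).
Proof. by apply: supp_Lam_of => ij; rewrite ffunE /Lam => /negbTE ->. Qed.

(* Arrivals at x stop after time min(x, n), since roots (i, x) of Lambda have
   i < x and i < n. *)
Lemma arrivals_ext p x t1 t2 : supp_Lam p ->
  (minn x n <= t1)%N -> (minn x n <= t2)%N -> arrivals p x t1 = arrivals p x t2.
Proof.
move=> supp; wlog le_t12 : t1 t2 / (t1 <= t2)%N.
  by move=> W ? ?; have [/W->|/ltnW/W->] := leqP t1 t2.
move=> le_t1 _; apply: big_nat_extend0 => // i le_t1_i; apply: supp.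
by move: le_t1; rewrite geq_min => /orP [] ?; apply/negP => /andP [? ?]; lia.
Qed.

Lemma arrivals_final p x : supp_Lam p -> arrivals p x R = arrivals p x (minn x n).
Proof.
by move=> supp; apply: arrivals_ext => //; rewrite (leq_trans (geq_minr _ _)) // n_le.
Qed.

Lemma throws_large p k : supp_Lam p -> (n <= k)%N -> throws p k = 0%N.
Proof.
move=> supp le_n_k; rewrite /throws big1_seq // => j _; apply: supp.
by rewrite [(k < n)%N]ltnNge le_n_k andbF.
Qed.

(* Coordinate k of the equation "p sums to delta", extended to all k : nat. *)
Lemma PL_balance p k : PLd p ->
  (throws p k)%:Z - (arrivals p k R)%:Z
  = nth 0 a k - (if (n <= k)%N then nth 0 b (k - n) else 0).
Proof.
move=> [_ sum_delta_p]; have [lt_k_R|le_R_k] := ltnP k R.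
  by have := sum_delta_p (Ordinal lt_k_R); rewrite sum_rootsE -throws_ord -arrivals_ord.
rewrite /throws /arrivals !big1_seq => [|i _|i _]; [|exact: mult_outr|exact: mult_outl].
have le_n_k := leq_trans n_le le_R_k.
rewrite nth_a_out // le_n_k nth_default ?subrr //.
by rewrite leq_subRL // (leq_trans size_b_le le_R_k).
Qed.

Lemma PL_throws p k : PLd p -> (k < n)%N ->
  (throws p k)%:Z = nth 0 a k + (arrivals p k k)%:Z.
Proof.
move=> Pp lt_k_n; have := PL_balance k Pp; rewrite leqNgt lt_k_n subr0.
rewrite (arrivals_final _ (PL_supp_Lam Pp)) (minn_idPl (ltnW lt_k_n)); lra.
Qed.

Lemma PL_nth_b p k : PLd p -> (n <= k)%N ->
  nth 0 b (k - n) = nth 0 a k + (arrivals p k n)%:Z.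
Proof.
move=> Pp le_n_k; have supp := PL_supp_Lam Pp.
have := PL_balance k Pp; rewrite le_n_k throws_large // arrivals_final //.
by rewrite (minn_idPr le_n_k); lra.
Qed.

Lemma JSeq_jseq_of p : PLd p -> JSeq a b n (jseq_of p).
Proof.
move=> Pp; have supp := PL_supp_Lam Pp; split.
- by rewrite size_mkseq.
- by apply/allP => s /mapP [t _ ->]; rewrite /state_of trim_idem.
- rewrite nth_jseq_of //; apply: state_of_eq => k.
  by rewrite /state_entry /arrivals big_geq // addr0.
- rewrite nth_jseq_of //; apply: state_of_eq => k.
  by rewrite /state_entry -(PL_nth_b Pp (leq_addr k n)) addKn.
move=> t lt_t_n; rewrite !nth_jseq_of ?(ltnW lt_t_n) //.
exists (fun h => mult p t (t + h)), R; split; [|split].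
- by move=> k lt_R_k; rewrite mult_outr // (leq_trans (ltnW lt_R_k)) // leq_addl.
- rewrite ent_state_of -Posz_sum /state_entry addn0 -(PL_throws Pp lt_t_n).
  congr Posz; symmetry; apply: big_nat_shift0 => // j.
    by move=> le_j_t; apply: supp; rewrite ltnNge le_j_t.
  exact: mult_outr.
move=> k k_gt0; rewrite !ent_state_of state_entry_S prednK //.
by rewrite addSnnS prednK.
Qed.

Lemma jseq_ofK p : PLd p -> jmap R n (jseq_of p) = p.
Proof.
move=> Pp; apply/ffunP => -[i x]; rewrite ffunE.
case: ifP => [/andP [lt_i_x lt_i_n] | not_Lam].
  rewrite !nth_jseq_of ?(ltnW lt_i_n) //= !ent_state_of /= state_entry_S.
  rewrite addSnnS prednK ?subn_gt0 // subnKC ?(ltnW lt_i_x) //.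
  by rewrite addrAC subrr add0r absz_nat multE.
by case: Pp => supp _; rewrite supp // /Lam not_Lam.
Qed.

Lemma handcap_jseq_ofP p m : PLd p ->
  handcap m (jseq_of p) <->
  (forall k : 'I_R, nth 0 a k + (\sum_i p (i, k))%N%:Z <= m%:Z).
Proof.
move=> Pp; have supp := PL_supp_Lam Pp.
split => [cap k | cap s /mapP [t t_le ->] x /mem_trim /mapP [k _ ->]].
  have : nth 0 (state_of p (minn k n)) (k - minn k n) <= m%:Z.
    apply: nth_le; apply: cap; apply: map_f.
    by rewrite mem_iota add0n ltnS geq_minr.
  by rewrite nth_state_of /state_entry subnKC ?geq_minl // -arrivals_ord arrivals_final.
rewrite mem_iota add0n ltnS in t_le.
have [lt_R|le_R] := ltnP (t + k) R; last by rewrite state_entry_out.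
apply: le_trans (cap (Ordinal lt_R)); rewrite -arrivals_ord /state_entry lerD2l lez_nat.
by rewrite /arrivals (@big_cat_nat _ _ _ t 0 R) //= ?leq_addr // (leq_trans t_le n_le).
Qed.

Definition throw_count ss i x : int :=
  ent (nth [::] ss i.+1) (x - i) - ent (nth [::] ss i) (x - i).+1.

Lemma state_telescope ss t k : nth [::] ss 0 = trim a ->
  nth 0 (nth [::] ss t) k
  = nth 0 a (t + k) + \sum_(0 <= i < t) throw_count ss i (t + k).
Proof.
move=> ss0; elim: t k => [|t IH] k; first by rewrite ss0 nth_trim big_geq // addr0.
rewrite big_nat_recr //= addSnnS addrA -IH /throw_count addKn /ent /=; ring.
Qed.

Lemma JSeq_throw_count ss i : JSeq a b n ss -> (i < n)%N -> exists c N,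
  [/\ (forall k, (N < k)%N -> c k = 0%N),
      \sum_(1 <= k < N.+1) (c k)%:Z = ent (nth [::] ss i) 1
    & forall h, (0 < h)%N -> throw_count ss i (i + h) = (c h)%:Z].
Proof.
move=> [_ _ _ _ steps] lt_i_n; have [c [N [c0 [sum_c next]]]] := steps i lt_i_n.
by exists c, N; split=> // h h_gt0; rewrite /throw_count addKn next //; ring.
Qed.

Lemma throw_count_ge0 ss i x : JSeq a b n ss -> (i < n)%N -> (i < x)%N ->
  0 <= throw_count ss i x.
Proof.
move=> J lt_i_n lt_i_x; have [c [N [_ _ cE]]] := JSeq_throw_count J lt_i_n.
by rewrite -(subnKC (ltnW lt_i_x)) cE ?subn_gt0.
Qed.

(* A throw landing at x >= R would leave a ball at position x - n of the final
   state, where b has none. *)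
Lemma throw_count_out ss i x : JSeq a b n ss -> (i < n)%N -> (R <= x)%N ->
  throw_count ss i x = 0.
Proof.
move=> J lt_i_n le_R_x; have le_n_x := leq_trans n_le le_R_x.
have [_ _ ss0 ssn _] := J.
have := state_telescope n (x - n) ss0.
rewrite subnKC // nth_a_out // add0r ssn nth_trim nth_default; last first.
  by rewrite leq_subRL // (leq_trans size_b_le le_R_x).
rewrite big_mkord => /esym /psumr_eq0P sum0; apply: (sum0 _ (Ordinal lt_i_n)) => // j _.
by apply: throw_count_ge0; rewrite // (leq_trans (leq_trans (ltn_ord j) n_le)).
Qed.

Lemma throw_count_jmap ss i x : JSeq a b n ss -> (i < n)%N -> (i < x)%N ->
  throw_count ss i x = (mult (jmap R n ss) i x)%:Z.
Proof.
move=> J lt_i_n lt_i_x; have [lt_x_R|le_R_x] := ltnP x R; last first.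
  by rewrite throw_count_out // mult_outr.
rewrite -[i]/(val (Ordinal (ltn_trans lt_i_x lt_x_R))) -[x]/(val (Ordinal lt_x_R)).
by rewrite multE ffunE /= lt_i_x lt_i_n gez0_abs // throw_count_ge0.
Qed.

Lemma arrivals_jmap ss k t : JSeq a b n ss -> (t <= n)%N -> (t <= k)%N ->
  (arrivals (jmap R n ss) k t)%:Z = \sum_(0 <= i < t) throw_count ss i k.
Proof.
move=> J le_t_n le_t_k; rewrite /arrivals Posz_sum.
apply: eq_big_nat => i /andP [_ lt_i_t].
by rewrite throw_count_jmap // ?(leq_trans lt_i_t).
Qed.

Lemma jmapK ss : JSeq a b n ss -> jseq_of (jmap R n ss) = ss.
Proof.
move=> J; have [size_ss trimmed ss0 _ _] := J.
apply: (@eq_from_nth _ [::]) => [|t]; first by rewrite size_mkseq.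
rewrite size_mkseq => lt_t_n; rewrite nth_mkseq //.
have lt_t_ss : (t < size ss)%N by rewrite size_ss.
have /eqP <- := allP trimmed _ (mem_nth [::] lt_t_ss).
apply: state_of_eq => k.
by rewrite state_telescope // /state_entry arrivals_jmap // ?leq_addr // -ltnS.
Qed.

(* The step at time k < n: the throws at time k number (s_k)_1. *)
Lemma throws_jmap ss k : JSeq a b n ss -> (k < n)%N ->
  (throws (jmap R n ss) k)%:Z = nth 0 a k + (arrivals (jmap R n ss) k k)%:Z.
Proof.
move=> J lt_k_n; have [_ _ ss0 _ _] := J.
have [c [N [c0 sum_c cE]]] := JSeq_throw_count J lt_k_n.
have := state_telescope k 0 ss0.
rewrite addn0 -(arrivals_jmap J (ltnW lt_k_n) (leqnn k)) => <-.
rewrite -[nth 0 _ 0]/(ent _ 1) -sum_c -Posz_sum; congr Posz.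
rewrite (@big_nat_extend0 c 1 N.+1 (N + R).+1) //; last by rewrite ltnS leq_addr.
rewrite /throws (@big_nat_shift0 _ k R (N + R).+1) //.
- apply: eq_big_nat => h /andP [h_gt0 _].
  have := cE h h_gt0; rewrite throw_count_jmap // => [[]//|].
  by rewrite -[X in (X < _)%N]addn0 ltn_add2l.
- by move=> j le_j_k; apply: supp_Lam_jmap; rewrite ltnNge le_j_k.
- exact: mult_outr.
- by rewrite ltnW // ltnS leq_addl.
Qed.

Lemma PL_jmap ss : JSeq a b n ss -> PLd (jmap R n ss).
Proof.
move=> J; have [_ _ ss0 ssn _] := J; have supp := supp_Lam_jmap ss.
split => [ij|k]; first by rewrite ffunE /Lam => /negbTE ->.
rewrite sum_rootsE -throws_ord -arrivals_ord arrivals_final // /delta.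
have [lt_k_n|le_n_k] := ltnP k n.
  by rewrite throws_jmap //; ring.
rewrite throws_large // arrivals_jmap //.
have := state_telescope n (k - n) ss0; rewrite subnKC // ssn nth_trim => ->; ring.
Qed.

Lemma QL_jmap m ss : JS a b n m ss -> QL a b n m (jmap R n ss).
Proof.
move=> [J cap]; have Pp := PL_jmap J; split => //.
by apply/(handcap_jseq_ofP _ Pp); rewrite jmapK.
Qed.

Lemma JS_jseq_of m p : QL a b n m p -> JS a b n m (jseq_of p).
Proof.
by move=> [Pp cap]; split; [exact: JSeq_jseq_of | exact/(handcap_jseq_ofP _ Pp)].
Qed.

Lemma Lam_lt (ij : 'I_R * 'I_R) : Lam n ij -> (ij.1 < ij.2)%N.
Proof. by case/andP. Qed.

Lemma PL_card : exists k, card_is PLd k.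
Proof.
exact: card_is_bounded_ffun (PLP _ _) (fun p => PL_mult_le (@Lam_lt)).
Qed.

Lemma QL_card m : exists k, card_is (@QL R a b n m) k.
Proof.
pose cap p := [forall k : 'I_R, nth 0 a k + (\sum_i p (i, k))%N%:Z <= m%:Z].
have QLP p : QL a b n m p <-> PLb (@Lam R n) (delta a b n) p && cap p.
  by split => [[/PLP -> /forallP]|/andP [/PLP Pp /forallP]].
exact: card_is_bounded_ffun QLP (fun p Qp => PL_mult_le (@Lam_lt) (proj1 Qp)).
Qed.

End JugglingMultisets.

Theorem mainTheorem7 (a b : seq int) (n m : nat)
  (hsum : \sum_(x <- a) x = \sum_(x <- b) x)
  (hn : (0 < n)%N) (hm : (0 < m)%N) :
  let R := Rdim a b n in
  [/\ (forall ss, JS a b n m ss -> QL a b n m (jmap R n ss)),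
      (forall ss1 ss2, JS a b n m ss1 -> JS a b n m ss2 ->
         jmap R n ss1 = jmap R n ss2 -> ss1 = ss2),
      (forall p : {ffun 'I_R * 'I_R -> nat}, QL a b n m p ->
         exists2 ss, JS a b n m ss & jmap R n ss = p),
      (exists k, card_is (JS a b n m) k /\ card_is (@QL R a b n m) k)
    & (exists k, card_is (JSeq a b n) k /\
                 card_is (PL (@Lam R n) (delta a b n)) k)].
Proof.
move=> R; split.
- exact: QL_jmap.
- by move=> ss1 ss2 [J1 _] [J2 _] eq_jmap; rewrite -(jmapK J1) -(jmapK J2) eq_jmap.
- by move=> p Qp; exists (jseq_of p); [exact: JS_jseq_of | exact: jseq_ofK (proj1 Qp)].
- have [k Qk] := QL_card a b n m; exists k; split => //.
  apply: (card_is_bij (@QL_jmap _ _ _ m) (@JS_jseq_of _ _ _ m) _ _ Qk).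
    by move=> ss [J _]; exact: jmapK.
  by move=> p [Pp _]; exact: jseq_ofK.
- have [k Pk] := PL_card a b n; exists k; split => //.
  exact: card_is_bij (@PL_jmap _ _ _) (@JSeq_jseq_of _ _ _)
    (@jmapK _ _ _) (@jseq_ofK _ _ _) Pk.
Qed.
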